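(* Let $F$ be a field. If $M$ and $M'$ are nonzero Puiseux monoids such that $F[M]$ and $F[M']$ are both half-factorial, then $F[M]\cong F[M']\cong F[X]$ as $F$-algebras.
   Context: A Puiseux monoid is an additive submonoid of $(\mathbb{Q}_{\ge 0},+)$. $F[M]$ denotes the semigroup algebra of $M$ over $F$ (finite formal sums $\sum_{s\in M} f(s)X^s$ with $X^sX^t=X^{s+t}$). An integral domain is half-factorial if it is atomic (every nonzero nonunit is a finite product of irreducibles) and any two such factorizations of the same element have the same number of factors. *)

From HB Require Import structures.
From mathcomp Require Import all_boot all_order all_algebra.
From Stdlib Require List.
Set Implicit Arguments. Unset Strict Implicit. Unset Printing Implicit Defensive.
Import Order.TTheory GRing.Theory Num.Theory.
Local Open Scope ring_scope.

Definition puiseux_monoid (M : rat -> Prop) : Prop :=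
  [/\ M 0, (forall a b, M a -> M b -> M (a + b)) & (forall a, M a -> 0 <= a)].

Definition nontrivial_monoid (M : rat -> Prop) : Prop := exists a, M a /\ a != 0.

Section Factorization.
Variables (T : Type) (P : T -> Prop) (mul : T -> T -> T) (one zero : T).

Definition is_unit (u : T) : Prop := P u /\ exists v, P v /\ mul u v = one.

Definition is_irreducible (a : T) : Prop :=
  [/\ P a, a <> zero, ~ is_unit a &
      forall b c, P b -> P c -> a = mul b c -> is_unit b \/ is_unit c].

Definition prodl (l : seq T) : T := foldr mul one l.

Definition atomic : Prop :=
  forall a, P a -> a <> zero -> ~ is_unit a ->
    exists l : seq T, (forall x, List.In x l -> is_irreducible x) /\ a = prodl l.

Definition half_factorial : Prop :=
  atomic /\
  forall l1 l2 : seq T,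
    (forall x, List.In x l1 -> is_irreducible x) ->
    (forall x, List.In x l2 -> is_irreducible x) ->
    prodl l1 = prodl l2 -> size l1 = size l2.
End Factorization.

(** The monoid algebra F[Q_{>=0}]-style representation: an element
    sum_q f(q) X^q is represented by its canonical term list: the list of pairs
    (q, f q) over the support of f, sorted by strictly increasing exponent, all
    coefficients nonzero. *)
Section MonoidAlgebra.
Variable F : fieldType.

Definition coefs (s : seq (rat * F)) (q : rat) : F :=
  \sum_(x <- s | x.1 == q) x.2.

Definition expos (s : seq (rat * F)) : seq rat :=
  sort (fun x y : rat => x <= y) (undup (map fst s)).

Definition normalize (s : seq (rat * F)) : seq (rat * F) :=
  [seq (q, coefs s q) | q <- [seq q <- expos s | coefs s q != 0]].

Definition canonical_terms (s : seq (rat * F)) : bool := normalize s == s.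

Definition in_alg (M : rat -> Prop) (s : seq (rat * F)) : Prop :=
  canonical_terms s /\ (forall x, x \in s -> M x.1).

Definition ma_zero : seq (rat * F) := [::].
Definition ma_one : seq (rat * F) := [:: (0, 1)].
Definition ma_add (s t : seq (rat * F)) := normalize (s ++ t).
Definition ma_mul (s t : seq (rat * F)) :=
  normalize [seq (a.1 + b.1, a.2 * b.2) | a <- s, b <- t].
Definition ma_scale (c : F) (s : seq (rat * F)) :=
  normalize [seq (x.1, c * x.2) | x <- s].

Definition alg_half_factorial (M : rat -> Prop) : Prop :=
  half_factorial (in_alg M) ma_mul ma_one ma_zero.

Definition poly_iso (M : rat -> Prop) (phi : {poly F} -> seq (rat * F)) : Prop :=
  (forall p, in_alg M (phi p)) /\
  injective phi /\
  (forall s, in_alg M s -> exists p, phi p = s) /\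
  (forall p q, phi (p + q) = ma_add (phi p) (phi q)) /\
  (forall p q, phi (p * q) = ma_mul (phi p) (phi q)) /\
  phi 1 = ma_one /\
  (forall (c : F) p, phi (c *: p) = ma_scale c (phi p)).

Definition alg_iso (M M' : rat -> Prop) (psi : seq (rat * F) -> seq (rat * F)) : Prop :=
  (forall s, in_alg M s -> in_alg M' (psi s)) /\
  (forall s t, in_alg M s -> in_alg M t -> psi s = psi t -> s = t) /\
  (forall t, in_alg M' t -> exists s, in_alg M s /\ psi s = t) /\
  (forall s t, in_alg M s -> in_alg M t -> psi (ma_add s t) = ma_add (psi s) (psi t)) /\
  (forall s t, in_alg M s -> in_alg M t -> psi (ma_mul s t) = ma_mul (psi s) (psi t)) /\
  psi ma_one = ma_one /\
  (forall (c : F) s, in_alg M s -> psi (ma_scale c s) = ma_scale c (psi s)).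
End MonoidAlgebra.

(* A product of two elements of F[M] is a monomial only if both factors are
   monomials: the lowest and the highest exponents of a product are the sums of
   those of the factors.  Hence the units of F[M] are the nonzero constants and a
   monomial X^e is irreducible exactly when e is an atom of M.  If F[M] is
   half-factorial, factoring X^m shows that every m in M is a sum of atoms, and
   any two atoms a1, a2 coincide: writing a1 / a2 = k2 / k1, the element
   X^(k1 a1) = X^(k2 a2) has factorizations of lengths k1 and k2.  So M = N a
   for a single atom a, and scaling exponents by a identifies F[X] with F[M]. *)

From Pilot Require Import Defs.
From HB Require Import structures.
From mathcomp Require Import all_boot all_order all_algebra.
From mathcomp Require Import ring lra.
Set Implicit Arguments. Unset Strict Implicit. Unset Printing Implicit Defensive.
Import Order.TTheory GRing.Theory Num.Theory.
Import archimedean.Num.Theory.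
Local Open Scope ring_scope.

Lemma sum_pred1_uniq (R : nmodType) (T : eqType) (r : seq T) (k : T) (G : T -> R) :
  uniq r -> \sum_(i <- r | i == k) G i = if k \in r then G k else 0.
Proof.
move=> ur; rewrite (eq_bigr (fun=> G k)) => [|i /eqP-> //].
rewrite big_const_seq (eq_count (a2 := pred1 k)) // count_uniq_mem //.
by case: (k \in r); rewrite //= addr0.
Qed.

Lemma eq_subr_add (R : zmodType) (a b q : R) : (b == q - a) = (a + b == q).
Proof. by rewrite eq_sym subr_eq addrC eq_sym. Qed.

Lemma sum_iota_widen0 (R : nmodType) (G : nat -> R) n m : (n <= m)%N ->
  (forall i, (n <= i)%N -> G i = 0) -> \sum_(i <- iota 0 n) G i = \sum_(i <- iota 0 m) G i.
Proof.
move=> nm G0; rewrite -(subnKC nm) iotaD big_cat /= add0n [X in _ + X]big_seq.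
by rewrite [X in _ + X]big1 ?addr0 // => i; rewrite mem_iota => /andP[/G0].
Qed.

Lemma seq_has_min {disp : Order.disp_t} {T : orderType disp} (l : seq T) : l != [::] ->
  exists2 m, m \in l & forall y, y \in l -> (m <= y)%O.
Proof.
elim: l => // x [|z l] IHl _.
  by exists x; rewrite ?mem_head // => y; rewrite inE => /eqP->.
have [m ml m_min] := IHl isT; have [xm|mx] := leP x m.
  by exists x; rewrite ?mem_head // => y; rewrite inE => /predU1P[->|/m_min/(le_trans xm)].
exists m; first by rewrite in_cons ml orbT.
move=> y; rewrite inE => /predU1P[->|/m_min //]; exact: ltW.
Qed.

Lemma seq_has_max {disp : Order.disp_t} {T : orderType disp} (l : seq T) : l != [::] ->
  exists2 m, m \in l & forall y, y \in l -> (y <= m)%O.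
Proof. by move=> /(seq_has_min (T := T^d))[m ml m_max]; exists m. Qed.

Lemma InP (T : eqType) (x : T) (s : seq T) : reflect (List.In x s) (x \in s).
Proof.
elim: s => [|y s IHs] /=; first by constructor.
by rewrite inE; apply: (iffP predU1P) => -[->|/IHs]; by [left|right].
Qed.

Section CanonicalTerms.
Variable F : fieldType.
Implicit Types (s t : seq (rat * F)) (q : rat).

Definition coef_support s := [seq q <- expos s | coefs s q != 0].

Lemma normalizeE s : normalize s = [seq (q, coefs s q) | q <- coef_support s].
Proof. by []. Qed.

Lemma coefs_notin s q : q \notin map fst s -> coefs s q = 0.
Proof.
move=> qs; rewrite /coefs big_seq_cond big1 // => x /andP[xs /eqP xq].
by case/negP: qs; rewrite -xq map_f.
Qed.

Lemma mem_coef_support s q : (q \in coef_support s) = (coefs s q != 0).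
Proof.
rewrite mem_filter /expos mem_sort mem_undup andbC.
by case: (boolP (q \in map fst s)) => // /coefs_notin->; rewrite eqxx.
Qed.

Lemma coef_support_uniq s : uniq (coef_support s).
Proof. by rewrite filter_uniq // sort_uniq undup_uniq. Qed.

Lemma coef_support_sorted s : sorted <=%R (coef_support s).
Proof. exact/(sorted_filter le_trans)/sort_sorted/le_total. Qed.

Lemma coefs_normalize s : coefs (normalize s) =1 coefs s.
Proof.
move=> q; rewrite normalizeE {1}/coefs big_map sum_pred1_uniq ?coef_support_uniq //.
by rewrite mem_coef_support; case: eqP.
Qed.

Lemma eq_normalize s t : coefs s =1 coefs t -> normalize s = normalize t.
Proof.
move=> st; rewrite !normalizeE.
suff -> : coef_support s = coef_support t by apply: eq_map => q; rewrite st.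
apply: (sorted_eq le_trans le_anti); rewrite ?coef_support_sorted //.
by apply: uniq_perm; rewrite ?coef_support_uniq // => q; rewrite !mem_coef_support st.
Qed.

Lemma canonical_termsP s : reflect (normalize s = s) (canonical_terms s).
Proof. exact: eqP. Qed.

Lemma canonical_normalize s : canonical_terms (normalize s).
Proof. exact/canonical_termsP/eq_normalize/coefs_normalize. Qed.

Lemma canonical_coefs_inj s t : canonical_terms s -> canonical_terms t ->
  coefs s =1 coefs t -> s = t.
Proof. by move=> /canonical_termsP {2}<- /canonical_termsP {2}<- /eq_normalize. Qed.

Lemma canonical_sorted s : canonical_terms s -> sorted <%R (map fst s).
Proof.
move/canonical_termsP<-; rewrite normalizeE -map_comp map_id.
by rewrite lt_sorted_uniq_le coef_support_uniq coef_support_sorted.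
Qed.

Lemma canonical_uniq s : canonical_terms s -> uniq (map fst s).
Proof. by move/canonical_sorted/lt_sorted_uniq. Qed.

Lemma canonical_coef_neq0 s x : canonical_terms s -> x \in s -> x.2 != 0.
Proof. by move/canonical_termsP<-; rewrite normalizeE => /mapP[q]; rewrite mem_coef_support => ? ->. Qed.

Lemma coefs_mem_uniq s x : uniq (map fst s) -> x \in s -> coefs s x.1 = x.2.
Proof.
elim: s => [|y s IHs] //= /andP[ys us]; rewrite inE /coefs big_cons -/(coefs s _).
case/orP=> [/eqP->|xs]; first by rewrite eqxx coefs_notin ?addr0.
suff /negbTE-> : y.1 != x.1 by rewrite IHs.
by apply: contraNneq ys => ->; rewrite map_f.
Qed.

Lemma canonical_coefs s x : canonical_terms s -> x \in s -> coefs s x.1 = x.2.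
Proof. by move/canonical_uniq; apply: coefs_mem_uniq. Qed.

Lemma canonical_coefs_neq0 s q : canonical_terms s -> q \in map fst s -> coefs s q != 0.
Proof. by move=> cs /mapP[x xs ->]; rewrite canonical_coefs // (canonical_coef_neq0 cs). Qed.

Lemma sorted_canonical s : sorted <%R (map fst s) ->
  (forall x, x \in s -> x.2 != 0) -> canonical_terms s.
Proof.
move=> ss s_neq0; have us := lt_sorted_uniq ss.
apply/canonical_termsP; rewrite normalizeE.
have -> : coef_support s = map fst s.
  apply: (sorted_eq le_trans le_anti); rewrite ?coef_support_sorted //.
    by move: ss; rewrite lt_sorted_uniq_le => /andP[].
  apply: uniq_perm; rewrite ?coef_support_uniq // => q; rewrite mem_coef_support.
  have [/mapP[x xs ->]|qs] := boolP (q \in map fst s); last by rewrite coefs_notin ?eqxx.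
  by rewrite coefs_mem_uniq // s_neq0.
by rewrite -map_comp -[RHS]map_id; apply/eq_in_map => x xs; rewrite /= coefs_mem_uniq //; case: x {xs}.
Qed.

Lemma mem_normalize_fst s x : x \in normalize s -> x.1 \in map fst s.
Proof.
rewrite normalizeE => /mapP[q]; rewrite mem_coef_support => + -> /=.
by apply: contraR => /coefs_notin->.
Qed.

Lemma coefs_add s t q : coefs (ma_add s t) q = coefs s q + coefs t q.
Proof. by rewrite /ma_add coefs_normalize /coefs big_cat. Qed.

Lemma coefs_scale c s q : coefs (ma_scale c s) q = c * coefs s q.
Proof. by rewrite /ma_scale coefs_normalize /coefs big_map mulr_sumr. Qed.

Lemma coefs_mul s t q :
  coefs (ma_mul s t) q = \sum_(x <- s) x.2 * coefs t (q - x.1).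
Proof.
rewrite /ma_mul coefs_normalize /coefs big_mkcond big_allpairs_dep /=.
apply: eq_bigr => x _; rewrite mulr_sumr [RHS]big_mkcond; apply: eq_bigr => y _ /=.
by rewrite eq_subr_add; case: eqP; rewrite ?mulr0.
Qed.

Lemma coefs_mul_l s t q :
  coefs (ma_mul s t) q = \sum_(y <- t) coefs s (q - y.1) * y.2.
Proof.
rewrite /ma_mul coefs_normalize /coefs big_mkcond big_allpairs_dep /= exchange_big.
apply: eq_bigr => y _; rewrite mulr_suml [RHS]big_mkcond; apply: eq_bigr => x _ /=.
by rewrite eq_subr_add addrC; case: eqP; rewrite ?mul0r.
Qed.

Lemma mul_normalizel s t : ma_mul (normalize s) t = ma_mul s t.
Proof.
apply: canonical_coefs_inj; rewrite ?canonical_normalize // => q.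
by rewrite !coefs_mul_l; apply: eq_bigr => y _; rewrite coefs_normalize.
Qed.

Lemma mul_normalizer s t : ma_mul s (normalize t) = ma_mul s t.
Proof.
apply: canonical_coefs_inj; rewrite ?canonical_normalize // => q.
by rewrite !coefs_mul; apply: eq_bigr => x _; rewrite coefs_normalize.
Qed.

Lemma coefs_monomial e (c : F) q : coefs [:: (e, c)] q = if e == q then c else 0.
Proof. by rewrite /coefs big_cons big_nil; case: eqP; rewrite ?addr0. Qed.

Lemma canonical_monomial e (c : F) : c != 0 -> canonical_terms [:: (e, c)].
Proof. by move=> c0; apply: sorted_canonical => // x; rewrite inE => /eqP->. Qed.

Lemma canonical_one : canonical_terms (ma_one F).
Proof. exact/canonical_monomial/oner_neq0. Qed.

Lemma mul_monomial e1 e2 (c1 c2 : F) : c1 * c2 != 0 ->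
  ma_mul [:: (e1, c1)] [:: (e2, c2)] = [:: (e1 + e2, c1 * c2)].
Proof.
move=> c12; apply: canonical_coefs_inj; rewrite ?canonical_normalize ?canonical_monomial //.
move=> q; rewrite coefs_mul big_seq1 !coefs_monomial /=.
by rewrite eq_subr_add; case: eqP; rewrite ?mulr0.
Qed.

Lemma prodl_nseq_monomial e k :
  prodl (@ma_mul F) (ma_one F) (nseq k [:: (e, 1)]) = [:: (k%:R * e, 1)].
Proof.
elim: k => [|k IHk] /=; first by rewrite mul0r.
by rewrite IHk mul_monomial ?mulr1 ?oner_neq0 // mulrSr mulrDl mul1r addrC.
Qed.

Lemma canonical_prodl (l : seq (seq (rat * F))) :
  canonical_terms (prodl (@ma_mul F) (ma_one F) l).
Proof. by case: l => [|x l]; [exact: canonical_one | exact: canonical_normalize]. Qed.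

End CanonicalTerms.

Section Dilation.
Variable F : fieldType.
Implicit Types (s t : seq (rat * F)) (c : rat).

Definition dilate c s := [seq (x.1 * c, x.2) | x <- s].

Lemma coefs_dilate c s q : c != 0 -> coefs (dilate c s) q = coefs s (q / c).
Proof.
move=> c0; rewrite /coefs big_map; apply: eq_bigl => x /=.
by apply/eqP/eqP => [<-|->]; rewrite ?mulfK ?divfK.
Qed.

Lemma canonical_dilate c s : 0 < c -> canonical_terms s -> canonical_terms (dilate c s).
Proof.
move=> c_gt0 cs; apply: sorted_canonical => [|_ /mapP[x xs ->]]; last first.
  exact: canonical_coef_neq0 cs xs.
rewrite -map_comp (map_comp (fun q => q * c) fst) sorted_map.
by apply: sub_sorted (canonical_sorted cs) => q r /=; rewrite ltr_pM2r.
Qed.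

Lemma dilate_normalize c s : 0 < c -> dilate c (normalize s) = normalize (dilate c s).
Proof.
move=> c_gt0; have c0 : c != 0 by rewrite gt_eqF.
apply: canonical_coefs_inj; rewrite ?canonical_dilate ?canonical_normalize // => q.
by rewrite coefs_normalize !coefs_dilate // coefs_normalize.
Qed.

Lemma dilate_add c s t : 0 < c -> dilate c (ma_add s t) = ma_add (dilate c s) (dilate c t).
Proof. by move=> c_gt0; rewrite /ma_add dilate_normalize // /dilate map_cat. Qed.

Lemma dilate_scale c (d : F) s : 0 < c -> dilate c (ma_scale d s) = ma_scale d (dilate c s).
Proof. by move=> c_gt0; rewrite /ma_scale dilate_normalize // /dilate -!map_comp. Qed.

Lemma dilate_one c : dilate c (ma_one F) = ma_one F.
Proof. by rewrite /dilate /= mul0r. Qed.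

Lemma dilate_mul c s t : 0 < c -> dilate c (ma_mul s t) = ma_mul (dilate c s) (dilate c t).
Proof.
move=> c_gt0; have c0 : c != 0 by rewrite gt_eqF.
apply: canonical_coefs_inj; rewrite ?canonical_dilate ?canonical_normalize // => q.
rewrite coefs_dilate // !coefs_mul /dilate big_map; apply: eq_bigr => x _ /=.
by rewrite coefs_dilate // mulrBl mulfK.
Qed.

Lemma dilate_inj c s t : c != 0 -> canonical_terms s -> canonical_terms t ->
  dilate c s = dilate c t -> s = t.
Proof.
move=> c0 cs ct st; apply: canonical_coefs_inj => // q.
by rewrite -[q](mulfK c0) -!coefs_dilate // st.
Qed.

Lemma dilateK c s : c != 0 -> dilate c (dilate c^-1 s) = s.
Proof. by move=> c0; rewrite /dilate -map_comp map_id_in // => -[q d] _ /=; rewrite mulfVK. Qed.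

End Dilation.

Section PolynomialTerms.
Variable F : fieldType.
Implicit Types (s : seq (rat * F)) (p q : {poly F}) (r : rat).

Definition poly_terms p : seq (rat * F) := [seq (i%:R, p`_i) | i <- iota 0 (size p)].

Definition terms_of_poly p := normalize (poly_terms p).

Lemma coefs_poly_terms_nat p k : coefs (poly_terms p) k%:R = p`_k.
Proof.
rewrite /coefs big_map (eq_bigl (pred1 k)) => [|i]; last by rewrite /= eqr_nat.
rewrite sum_pred1_uniq ?iota_uniq // mem_iota add0n.
by case: ltnP => // /(nth_default 0)->.
Qed.

Lemma coefs_poly_terms_nonnat p r : r \isn't a Num.nat -> coefs (poly_terms p) r = 0.
Proof.
by move=> rN; apply: coefs_notin; apply: contra rN; rewrite -map_comp => /mapP[i _ ->] /=.
Qed.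

Lemma terms_of_poly_nat p x : x \in terms_of_poly p -> x.1 \is a Num.nat.
Proof. by move/mem_normalize_fst; rewrite -map_comp => /mapP[i _ ->] /=. Qed.

Lemma terms_of_polyE p s : canonical_terms s ->
    (forall k : nat, coefs s k%:R = p`_k) ->
    (forall r, r \isn't a Num.nat -> coefs s r = 0) ->
  terms_of_poly p = s.
Proof.
move=> cs s_nat s_nonnat; apply: canonical_coefs_inj; rewrite ?canonical_normalize // => r.
rewrite coefs_normalize; have [/natrP[k ->]|rN] := boolP (r \is a Num.nat).
  by rewrite coefs_poly_terms_nat s_nat.
by rewrite coefs_poly_terms_nonnat ?s_nonnat.
Qed.

Lemma terms_of_poly_add p q :
  terms_of_poly (p + q) = ma_add (terms_of_poly p) (terms_of_poly q).
Proof.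
apply: terms_of_polyE => [|k|r rN]; rewrite ?canonical_normalize // coefs_add.
  by rewrite !coefs_normalize !coefs_poly_terms_nat coefD.
by rewrite !coefs_normalize !coefs_poly_terms_nonnat ?addr0.
Qed.

Lemma terms_of_poly_scale c p : terms_of_poly (c *: p) = ma_scale c (terms_of_poly p).
Proof.
apply: terms_of_polyE => [|k|r rN]; rewrite ?canonical_normalize // coefs_scale.
  by rewrite coefs_normalize coefs_poly_terms_nat coefZ.
by rewrite coefs_normalize coefs_poly_terms_nonnat ?mulr0.
Qed.

Lemma terms_of_poly_one : terms_of_poly 1 = ma_one F.
Proof.
apply: terms_of_polyE => [|k|r rN]; rewrite ?canonical_one // coefs_monomial.
  by rewrite coef1 -[0 : rat]/(0%:R) eqr_nat eq_sym; case: (k == 0)%N.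
by case: eqP rN => // <-; rewrite nat_num0.
Qed.

Lemma coefs_mul_poly_terms p q k :
  coefs (ma_mul (poly_terms p) (poly_terms q)) k%:R = (p * q)`_k.
Proof.
pose G i := if (i <= k)%N then p`_i * q`_(k - i) else 0.
rewrite coefs_mul big_map coefM -(big_mkord xpredT (fun i => p`_i * q`_(k - i))).
rewrite /index_iota subn0.
have -> : \sum_(i <- iota 0 (size p)) p`_i * coefs (poly_terms q) (k%:R - i%:R) =
    \sum_(i <- iota 0 (size p)) G i.
  apply: eq_bigr => i _; rewrite /G; case: leqP => [ik|ki].
    by rewrite -natrB // coefs_poly_terms_nat.
  rewrite coefs_poly_terms_nonnat ?mulr0 //; apply/negP => /natr_ge0.
  by rewrite subr_ge0 ler_nat leqNgt ki.
have -> : \sum_(i <- iota 0 k.+1) p`_i * q`_(k - i) = \sum_(i <- iota 0 k.+1) G i.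
  by rewrite !big_seq; apply: eq_bigr => i; rewrite mem_iota /G ltnS => /andP[_ ->].
rewrite (@sum_iota_widen0 _ G _ (size p + k.+1) (leq_addr _ _)); last first.
  by move=> i /(nth_default 0) pi; rewrite /G pi mul0r if_same.
rewrite (@sum_iota_widen0 _ G k.+1 (size p + k.+1) (leq_addl _ _)) // => i.
by rewrite /G ltnNge => /negbTE->.
Qed.

Lemma terms_of_poly_mul p q :
  terms_of_poly (p * q) = ma_mul (terms_of_poly p) (terms_of_poly q).
Proof.
rewrite /terms_of_poly mul_normalizel mul_normalizer.
apply: terms_of_polyE => [|k|r rN]; rewrite ?canonical_normalize ?coefs_mul_poly_terms //.
rewrite coefs_mul big_map big1 // => i _.
rewrite coefs_poly_terms_nonnat ?mulr0 //; apply: contra rN => /natrP[j rij].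
by rewrite -(subrK i%:R r) rij -natrD.
Qed.

Lemma terms_of_poly_inj : injective terms_of_poly.
Proof.
move=> p q pq; apply/polyP => k.
by have := congr1 (fun s => coefs s k%:R) pq; rewrite /= !coefs_normalize !coefs_poly_terms_nat.
Qed.

Lemma terms_of_poly_surj s : canonical_terms s ->
  (forall x, x \in s -> x.1 \is a Num.nat) -> exists p, terms_of_poly p = s.
Proof.
move=> cs s_nat; pose N := (\max_(x <- s) Num.truncn x.1).+1.
exists (\poly_(i < N) coefs s i%:R); apply: terms_of_polyE => // [k|r rN].
  rewrite coef_poly; case: ltnP => // Nk; apply: coefs_notin.
  apply/negP => /mapP[x xs xk]; suff : (Num.truncn x.1 < N)%N by rewrite -xk natrK ltnNge Nk.
  by rewrite ltnS (leq_bigmax_seq x xs).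
by apply: coefs_notin; apply: contra rN => /mapP[x /s_nat + ->].
Qed.

End PolynomialTerms.

Section MonomialFactors.
Variable F : fieldType.
Implicit Types (s t : seq (rat * F)) (e : rat).

Lemma coefs_mul_min s t m1 m2 :
    (forall y, y \in map fst s -> m1 <= y) -> (forall y, y \in map fst t -> m2 <= y) ->
  coefs (ma_mul s t) (m1 + m2) = coefs s m1 * coefs t m2.
Proof.
move=> s_min t_min; rewrite coefs_mul {2}/coefs big_distrl [RHS]big_mkcond /= !big_seq.
apply: eq_bigr => x xs; have := s_min _ (map_f fst xs).
rewrite le_eqVlt => /predU1P[->|m1x]; first by rewrite eqxx addrC addKr.
rewrite gt_eqF // coefs_notin ?mulr0 //; by apply/negP => /t_min; lra.
Qed.

Lemma coefs_mul_max s t m1 m2 :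
    (forall y, y \in map fst s -> y <= m1) -> (forall y, y \in map fst t -> y <= m2) ->
  coefs (ma_mul s t) (m1 + m2) = coefs s m1 * coefs t m2.
Proof.
move=> s_max t_max; rewrite coefs_mul {2}/coefs big_distrl [RHS]big_mkcond /= !big_seq.
apply: eq_bigr => x xs; have := s_max _ (map_f fst xs).
rewrite le_eqVlt => /predU1P[->|xm1]; first by rewrite eqxx addrC addKr.
rewrite lt_eqF // coefs_notin ?mulr0 //; by apply/negP => /t_max; lra.
Qed.

Lemma canonical_eq_monomial s e : canonical_terms s -> s != [::] ->
  (forall y, y \in map fst s -> y = e) -> s = [:: (e, coefs s e)].
Proof.
case: s => // x [|z s] cs _ s_e.
  by rewrite -(s_e x.1) ?mem_head // canonical_coefs ?mem_head //; case: x {cs s_e}.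
move: (canonical_uniq cs); rewrite /= inE negb_or => /andP[/andP[/eqP[]]].
by rewrite (s_e x.1) ?mem_head // (s_e z.1) // !inE eqxx orbT.
Qed.

Lemma mul_eq_monomial s t e c : canonical_terms s -> canonical_terms t ->
    ma_mul s t = [:: (e, c)] ->
  exists e1 c1 e2 c2, [/\ s = [:: (e1, c1)], t = [:: (e2, c2)] & e = e1 + e2].
Proof.
move=> cs ct st_e.
have c0 : c != 0.
  apply: (canonical_coef_neq0 (s := [:: (e, c)]) (x := (e, c))); last exact: mem_head.
  by rewrite -st_e canonical_normalize.
have supp_e r : coefs (ma_mul s t) r != 0 -> e = r.
  by rewrite st_e coefs_monomial; case: (eqVneq e r) => // _; rewrite eqxx.
have st_e_c : coefs (ma_mul s t) e = c by rewrite st_e coefs_monomial eqxx.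
have s_neq0 : map fst s != [::].
  case: s st_e_c {cs st_e supp_e} => //; rewrite coefs_mul big_nil => /esym/eqP.
  by rewrite (negbTE c0).
have t_neq0 : map fst t != [::].
  case: t st_e_c {ct st_e supp_e s_neq0} => //; rewrite coefs_mul_l big_nil => /esym/eqP.
  by rewrite (negbTE c0).
have [lo1 lo1s lo1_min] := seq_has_min s_neq0.
have [hi1 hi1s hi1_max] := seq_has_max s_neq0.
have [lo2 lo2t lo2_min] := seq_has_min t_neq0.
have [hi2 hi2t hi2_max] := seq_has_max t_neq0.
have e_lo : e = lo1 + lo2.
  by apply: supp_e; rewrite coefs_mul_min // mulf_neq0 // canonical_coefs_neq0.
have e_hi : e = hi1 + hi2.
  by apply: supp_e; rewrite coefs_mul_max // mulf_neq0 // canonical_coefs_neq0.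
have := hi1_max _ lo1s; have := hi2_max _ lo2t => le2 le1.
have lo_hi1 : lo1 = hi1 by lra.
have lo_hi2 : lo2 = hi2 by lra.
exists lo1, (coefs s lo1), lo2, (coefs t lo2); split => //.
  apply: canonical_eq_monomial => // [|y ys]; first by apply: contraNneq s_neq0 => ->.
  by apply/eqP; rewrite eq_le lo1_min // lo_hi1 hi1_max.
apply: canonical_eq_monomial => // [|y yt]; first by apply: contraNneq t_neq0 => ->.
by apply/eqP; rewrite eq_le lo2_min // lo_hi2 hi2_max.
Qed.

End MonomialFactors.

Lemma puiseux_monoid0 M : puiseux_monoid M -> M 0.
Proof. by case. Qed.

Lemma puiseux_monoidD M a b : puiseux_monoid M -> M a -> M b -> M (a + b).
Proof. by case=> _ + _; apply. Qed.

Lemma puiseux_monoid_ge0 M a : puiseux_monoid M -> M a -> 0 <= a.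
Proof. by case=> _ _; apply. Qed.

Definition is_atom (M : rat -> Prop) a :=
  [/\ M a, a != 0 & forall b d, M b -> M d -> a = b + d -> b = 0 \/ d = 0].

Section HalfFactorial.
Variables (F : fieldType) (M : rat -> Prop).
Hypothesis PM : puiseux_monoid M.
Implicit Types (s u : seq (rat * F)) (e : rat) (c : F).

Local Notation unit := (is_unit (Defs.in_alg M) (@ma_mul F) (ma_one F)).
Local Notation irreducible := (is_irreducible (Defs.in_alg M) (@ma_mul F) (ma_one F) (ma_zero F)).

Lemma in_alg_monomial e c : M e -> c != 0 -> Defs.in_alg M [:: (e, c)].
Proof. by move=> Me c0; split; [exact: canonical_monomial | move=> x; rewrite inE => /eqP->]. Qed.

Lemma in_alg_monomialP e c : Defs.in_alg M [:: (e, c)] -> M e /\ c != 0.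
Proof.
case=> cs eM; split; first exact: (eM (e, c) (mem_head _ _)).
exact: (canonical_coef_neq0 (x := (e, c)) cs (mem_head _ _)).
Qed.

Lemma unit_monomial u : unit u -> exists c, u = [:: (0, c)].
Proof.
case=> [[cu uM] [v [[cv vM] uv]]].
have [e1 [c1 [e2 [c2 [u_e1 v_e2 e12]]]]] := mul_eq_monomial cu cv uv.
have /(puiseux_monoid_ge0 PM) e1_ge0 : M e1 by apply: (uM (e1, c1)); rewrite u_e1 mem_head.
have /(puiseux_monoid_ge0 PM) e2_ge0 : M e2 by apply: (vM (e2, c2)); rewrite v_e2 mem_head.
by exists c1; rewrite u_e1; congr [:: (_, _)]; lra.
Qed.

Lemma unit_const c : c != 0 -> unit [:: (0, c)].
Proof.
move=> c0; have M0 := puiseux_monoid0 PM; split; first exact: in_alg_monomial.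
exists [:: (0, c^-1)]; split; first by apply: in_alg_monomial; rewrite ?invr_eq0.
by rewrite mul_monomial mulfV ?addr0 ?oner_neq0.
Qed.

Lemma irreducible_monomial_atom e c : irreducible [:: (e, c)] -> is_atom M e.
Proof.
case=> /in_alg_monomialP[Me c0] _ not_unit e_irr; split => // [|b d Mb Md ebd].
  by apply: contra_notN not_unit => /eqP->; apply: unit_const.
have := e_irr [:: (b, c)] [:: (d, 1)] (in_alg_monomial Mb c0) (in_alg_monomial Md (oner_neq0 _)).
rewrite mul_monomial ?mulr1 // -ebd => /(_ erefl).
by case=> /unit_monomial[? [-> _]]; [left|right].
Qed.

Lemma atom_irreducible_monomial e : is_atom M e -> irreducible [:: (e, 1)].
Proof.
case=> Me e0 e_atom; split => [||/unit_monomial[c [e0']]|b d [cb bM] [cd dM] ebd].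
- exact: in_alg_monomial (oner_neq0 _).
- by [].
- by rewrite e0' eqxx in e0.
have [e1 [c1 [e2 [c2 [b_e1 d_e2 e12]]]]] := mul_eq_monomial cb cd (esym ebd).
have Me1 : M e1 by apply: (bM (e1, c1)); rewrite b_e1 mem_head.
have Me2 : M e2 by apply: (dM (e2, c2)); rewrite d_e2 mem_head.
have c1_neq0 : c1 != 0 by apply: (canonical_coef_neq0 (x := (e1, c1)) cb); rewrite b_e1 mem_head.
have c2_neq0 : c2 != 0 by apply: (canonical_coef_neq0 (x := (e2, c2)) cd); rewrite d_e2 mem_head.
by case: (e_atom e1 e2 Me1 Me2 e12) => e0'; [left; rewrite b_e1 | right; rewrite d_e2];
  rewrite e0'; apply: unit_const.
Qed.

Lemma prodl_irreducible_monomial l e c : (forall x, List.In x l -> irreducible x) ->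
    prodl (@ma_mul F) (ma_one F) l = [:: (e, c)] ->
  exists2 atoms, (forall a, a \in atoms -> is_atom M a) & e = \sum_(a <- atoms) a.
Proof.
elim: l e c => [|x l IHl] e c l_irr /=; first by case=> <- _; exists [::]; rewrite ?big_nil.
have x_irr := l_irr x (or_introl erefl); have [[cx _] _ _ _] := x_irr.
case/(mul_eq_monomial cx (canonical_prodl l)) => e1 [c1 [e2 [c2 [x_e1 l_e2 ->]]]].
have [atoms atomsP ->] := IHl e2 c2 (fun y l_y => l_irr y (or_intror l_y)) l_e2.
exists (e1 :: atoms); last by rewrite big_cons.
move=> a; rewrite inE => /predU1P[->|/atomsP //].
by apply: (@irreducible_monomial_atom _ c1); rewrite -x_e1.
Qed.

Hypothesis HF : alg_half_factorial F M.

Lemma sum_of_atoms m : M m ->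
  exists2 atoms, (forall a, a \in atoms -> is_atom M a) & m = \sum_(a <- atoms) a.
Proof.
move=> Mm; have [->|m0] := eqVneq m 0; first by exists [::]; rewrite ?big_nil.
have [//||l [l_irr m_l]] := HF.1 [:: (m, 1)] (in_alg_monomial Mm (oner_neq0 _)).
  by case/unit_monomial=> c [m0']; rewrite m0' eqxx in m0.
exact: prodl_irreducible_monomial l_irr (esym m_l).
Qed.

Lemma atom_unique a1 a2 : is_atom M a1 -> is_atom M a2 -> a1 = a2.
Proof.
move=> A1 A2; have [_ a2_neq0 _] := A2.
have a_gt0 a : is_atom M a -> 0 < a.
  by case=> Ma a0 _; rewrite lt_def a0 (puiseux_monoid_ge0 PM).
pose r := a1 / a2; have r_gt0 : 0 < r by rewrite divr_gt0 ?a_gt0.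
pose k1 := `|denq r|%N; pose k2 := `|numq r|%N.
have k1E : k1%:R = (denq r)%:~R :> rat by rewrite natr_absz gtr0_norm.
have k2E : k2%:R = (numq r)%:~R :> rat by rewrite natr_absz gtr0_norm ?numq_gt0.
have k12 : k1%:R * a1 = k2%:R * a2 by rewrite k1E k2E numqE /r; field.
have nseq_irr k a : is_atom M a ->
    forall x, List.In x (nseq k [:: (a, 1)]) -> irreducible x.
  by move=> Aa x /InP; rewrite mem_nseq => /andP[_ /eqP->]; apply: atom_irreducible_monomial.
have := HF.2 _ _ (nseq_irr k1 _ A1) (nseq_irr k2 _ A2).
rewrite !prodl_nseq_monomial k12 !size_nseq => /(_ erefl) k1_k2.
have k1_neq0 : k1%:R != 0 :> rat by rewrite k1E intr_eq0 denq_neq0.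
by apply: (mulfI k1_neq0); rewrite k12 k1_k2.
Qed.

Lemma half_factorial_cyclic : nontrivial_monoid M ->
  exists2 a, 0 < a & forall e, M e <-> exists k : nat, e = k%:R * a.
Proof.
case=> m [/sum_of_atoms[[|a atoms] atomsP m_atoms] m0].
  by rewrite m_atoms big_nil eqxx in m0.
have [Ma a0 _] := atomsP a (mem_head _ _).
exists a => [|e]; first by rewrite lt_def a0 (puiseux_monoid_ge0 PM).
split=> [/sum_of_atoms[atoms' atoms'P ->]|[k ->]].
  exists (size atoms'); rewrite (eq_big_seq (fun=> a)) => [|b /atoms'P Ab].
    by rewrite big_const_seq iter_addr_0 mulr_natl; congr (_ *+ _); apply: count_predT.
  exact: atom_unique Ab (atomsP a (mem_head _ _)).
elim: k => [|k IHk]; first by rewrite mul0r; apply: puiseux_monoid0.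
by rewrite mulrSr mulrDl mul1r; apply: puiseux_monoidD.
Qed.

End HalfFactorial.

Section Isomorphisms.
Variable F : fieldType.
Implicit Types (M : rat -> Prop) (s : seq (rat * F)).

Lemma in_alg_dilate M c d s : 0 < c -> canonical_terms s ->
    (forall x, x \in s -> exists k : nat, x.1 = k%:R * d) ->
    (forall k : nat, M (k%:R * (d * c))) ->
  Defs.in_alg M (dilate c s).
Proof.
move=> c_gt0 cs s_d Md; split; first exact: canonical_dilate.
by move=> _ /mapP[x /s_d[k ->] ->]; rewrite /= -mulrA.
Qed.

Lemma dilate_poly_iso M a : 0 < a -> (forall e, M e <-> exists k : nat, e = k%:R * a) ->
  poly_iso M (fun p : {poly F} => dilate a (terms_of_poly p)).
Proof.
move=> a_gt0 ME; have a0 : a != 0 by rewrite gt_eqF.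
split; [|split; [|split; [|split; [|split; [|split]]]]].
- move=> p; apply: (in_alg_dilate (d := 1)); rewrite ?canonical_normalize //.
    by move=> x /terms_of_poly_nat/natrP[k ->]; exists k; rewrite mulr1.
  by move=> k; apply/ME; exists k; rewrite mul1r.
- by move=> p q /(dilate_inj a0) pq; apply/terms_of_poly_inj/pq; apply: canonical_normalize.
- move=> s [cs sM]; have [p ep] : exists p, terms_of_poly p = dilate a^-1 s.
    apply: terms_of_poly_surj; first by apply: canonical_dilate; rewrite ?invr_gt0.
    by move=> _ /mapP[x /sM/ME[k ->] ->]; rewrite /= mulfK.
  by exists p; rewrite ep dilateK.
- by move=> p q; rewrite terms_of_poly_add dilate_add.
- by move=> p q; rewrite terms_of_poly_mul dilate_mul.
- by rewrite terms_of_poly_one dilate_one.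
- by move=> c p; rewrite terms_of_poly_scale dilate_scale.
Qed.

Lemma dilate_alg_iso M M' a b : 0 < a -> 0 < b ->
    (forall e, M e <-> exists k : nat, e = k%:R * a) ->
    (forall e, M' e <-> exists k : nat, e = k%:R * b) ->
  alg_iso M M' (dilate (F := F) (b / a)).
Proof.
move=> a_gt0 b_gt0 ME M'E; have ba_gt0 : 0 < b / a by rewrite divr_gt0.
have [a0 ba0] : a != 0 /\ b / a != 0 by rewrite !gt_eqF.
split; [|split; [|split; [|split; [|split; [|split]]]]].
- move=> s [cs sM]; apply: (in_alg_dilate (d := a)) => // [x /sM/ME //|k].
  by apply/M'E; exists k; rewrite [a * _]mulrC divfK.
- by move=> s t [cs _] [ct _]; apply: dilate_inj.
- move=> t [ct tM]; exists (dilate (b / a)^-1 t); split; last exact: dilateK.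
  apply: (in_alg_dilate (d := b)) => [||x /tM/M'E //|k]; rewrite ?invr_gt0 //.
  by apply/ME; exists k; rewrite invf_div [b * _]mulrC divfK ?gt_eqF.
- by move=> s t _ _; rewrite dilate_add.
- by move=> s t _ _; rewrite dilate_mul.
- exact: dilate_one.
- by move=> c s _; rewrite dilate_scale.
Qed.

End Isomorphisms.

Theorem mainTheorem9 (F : fieldType) (M M' : rat -> Prop) :
  puiseux_monoid M -> nontrivial_monoid M ->
  puiseux_monoid M' -> nontrivial_monoid M' ->
  alg_half_factorial F M -> alg_half_factorial F M' ->
  [/\ (exists psi, @alg_iso F M M' psi),
      (exists phi, @poly_iso F M phi) &
      (exists phi', @poly_iso F M' phi')].
Proof.
move=> PM NM PM' NM' HF HF'.
have [a a_gt0 ME] := half_factorial_cyclic PM HF NM.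
have [b b_gt0 M'E] := half_factorial_cyclic PM' HF' NM'.
split.
- by exists (dilate (b / a)); apply: dilate_alg_iso.
- by exists (fun p => dilate a (terms_of_poly p)); apply: dilate_poly_iso.
- by exists (fun p => dilate b (terms_of_poly p)); apply: dilate_poly_iso.
Qed.
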